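(* Let $X$ be a Calabi–Yau 4-fold, $\beta\in H_2(X,\mathbb{Z})$ and $\alpha\in H^2(X)$ with $\alpha\cdot\beta=0$. Then the identity \[ n_{0,\beta}(\alpha^2)=\frac{1}{2}\sum_{\substack{\beta_1+\beta_2=\beta\\ \beta_1,\beta_2>0}}(\alpha\cdot\beta_1)(\alpha\cdot\beta_2)\,m_{\beta_1,\beta_2} \] is equivalent to the identity \[ n_{0,\beta}(\alpha^2)=\frac{1}{2}\sum_{\substack{k_1,k_2\in\mathbb{Z}_{>0}\\ \gcd(k_1,k_2)=1}}\ \sum_{\substack{\beta_1+\beta_2=\beta\\ k_1\mid\beta_1,\ k_2\mid\beta_2}}\ \sum_{a,b}\frac{(\alpha\cdot\beta_1)(\alpha\cdot\beta_2)}{k_1^2k_2^2}\,n_{0,\beta_1/k_1}(S_a)\,g^{ab}\,n_{0,\beta_2/k_2}(S_b), \] where $\{S_a\}$ is a basis of the free part of $H^4(X,\mathbb{Z})$.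
   Context: A Calabi–Yau 4-fold is a smooth complex projective 4-fold with $K_X\cong\mathcal{O}_X$. Fix an ample class; $\beta>0$ means nonzero of positive degree; sums over $\beta_1+\beta_2=\beta$ run over $\beta_1,\beta_2>0$, and $k\mid\beta_i$ means $\beta_i/k\in H_2(X,\mathbb{Z})$. $\mathrm{GW}_{0,\beta}(\gamma)=\int_{[\overline{M}_{0,1}(X,\beta)]^{\mathrm{vir}}}\mathrm{ev}^*\gamma$ for $\gamma\in H^4(X)$, and $n_{0,\beta}(\gamma)$ is defined by $\sum_{\beta>0}\mathrm{GW}_{0,\beta}(\gamma)q^\beta=\sum_{\beta>0}n_{0,\beta}(\gamma)\sum_{d\ge1}d^{-2}q^{d\beta}$ (extended linearly in $\gamma$). $\sum_{a,b}g^{ab}S_a\otimes S_b$ is the Künneth decomposition of the $(4,4)$-component of the diagonal class mod torsion, i.e. $(g^{ab})$ is the inverse of $(g_{ab})=(\int_XS_aS_b)$. The meeting invariants $m_{\beta_1,\beta_2}$ are determined by: symmetry; $m_{\beta_1,\beta_2}=0$ if $\deg\beta_1\le0$ or $\deg\beta_2\le0$; for $\beta_1\ne\beta_2$, $m_{\beta_1,\beta_2}=\sum n_{0,\beta_1}(S_a)g^{ab}n_{0,\beta_2}(S_b)+m_{\beta_1,\beta_2-\beta_1}+m_{\beta_1-\beta_2,\beta_2}$; $m_{\beta,\beta}=n_{0,\beta}(c_2(X))+\sum n_{0,\beta}(S_a)g^{ab}n_{0,\beta}(S_b)-\sum_{\beta_1+\beta_2=\beta}m_{\beta_1,\beta_2}$.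 *)

From HB Require Import structures.
From mathcomp Require Import all_boot all_order all_algebra.
From mathcomp Require Import boolp classical_sets functions cardinality fsbigop.
Set Implicit Arguments. Unset Strict Implicit. Unset Printing Implicit Defensive.
Import Order.TTheory GRing.Theory Num.Theory.
Local Open Scope ring_scope.

(* Abstract cohomological data of a Calabi--Yau 4-fold X.
   - H_2(X,Z) (mod torsion) = 'rV[int]_r  (coordinates in a Z-basis);
   - H^2(X) = 'rV[F]_r in the dual basis, so alpha.beta = sum_i alpha_i beta_i;
   - the free part of H^4(X,Z) has basis S_0..S_{p-1}; H^4(X) = 'rV[F]_p;
   - omega : 'rV[int]_r is the fixed (integral) ample class.               *)

Definition H2 (r : nat) := 'rV[int]_r.

Definition deg (r : nat) (omega : 'rV[int]_r) (b : 'rV[int]_r) : int :=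
  \sum_(i < r) omega ord0 i * b ord0 i.

Definition cpos (r : nat) (omega : 'rV[int]_r) (b : 'rV[int]_r) : Prop :=
  b != 0 /\ (0 < deg omega b)%R.

Definition pairing (F : numFieldType) (r : nat) (alpha : 'rV[F]_r)
  (b : 'rV[int]_r) : F := \sum_(i < r) alpha ord0 i * (b ord0 i)%:~R.

(* alpha^2 in H^4(X), given the cup products cup i j = e_i . e_j in H^4(X) *)
Definition sq_class (F : numFieldType) (r p : nat)
  (cup : 'I_r -> 'I_r -> 'rV[F]_p) (alpha : 'rV[F]_r) : 'rV[F]_p :=
  \sum_(i < r) \sum_(j < r) (alpha ord0 i * alpha ord0 j) *: cup i j.

Definition dvdv (r : nat) (k : nat) (b : 'rV[int]_r) : Prop :=
  forall i, (k%:Z %| b ord0 i)%Z.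

Definition divv (r : nat) (k : nat) (b : 'rV[int]_r) : 'rV[int]_r :=
  map_mx (fun z : int => (z %/ k%:Z)%Z) b.

(* extension by linearity: value of a family (x a = x(S_a)) on a class gamma *)
Definition linH4 (F : numFieldType) (p : nat) (x : 'I_p -> F) (g : 'rV[F]_p) : F :=
  \sum_(a < p) g ord0 a * x a.

(* (g^{ab}) = inverse of the intersection matrix (g_{ab}) = (int S_a S_b) *)
Definition ginv (F : numFieldType) (p : nat) (G : 'M[int]_p) : 'M[F]_p :=
  invmx (map_mx (fun z : int => z%:~R) G).

Definition gpair (F : numFieldType) (p : nat) (G : 'M[int]_p)
  (x y : 'I_p -> F) : F :=
  \sum_(a < p) \sum_(b < p) x a * ginv F G a b * y b.

(* Write a splitting (b1, b2) of a curve class as (g1, g2) M, that is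
   b1 = a g1 + c g2 and b2 = b g1 + d g2, with g1, g2 of positive degree and
   M = (a b; c d) of determinant 1 with entries in N.  Every such M other than
   the identity is uniquely M' (1 1; 0 1) or M' (1 0; 1 1), which is the shape of
   the recursion defining the meeting invariants; unfolding it gives
   m_{b1,b2} = sum over all such (M, g) of <n_{g1}, n_{g2}> when b1 and b2 are
   not collinear, while collinear splittings of beta do not contribute because
   alpha.beta = 0 forces alpha.b1 = 0.  Conversely M is determined by its row
   sums (k1, k2), which run exactly over the coprime pairs, and the classes of
   the second formula are k1 g1 and k2 g2.  Since k1 alpha.g1 + k2 alpha.g2 = 0,
   the weight (alpha.(k1 g1)) (alpha.(k2 g2)) / (k1 k2)^2 equals
   (alpha.b1) (alpha.b2), so both sides are the same sum over pairs (M, g).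
   Gromov compactness, transported to n by the multiple cover formula, makes
   every sum finite. *)

From HB Require Import structures.
From mathcomp Require Import all_boot all_order all_algebra.
From mathcomp Require Import boolp classical_sets functions cardinality fsbigop.
From mathcomp Require Import zify ring.
Import Order.TTheory GRing.Theory Num.Theory.
Set Implicit Arguments. Unset Strict Implicit. Unset Printing Implicit Defensive.
Local Open Scope classical_set_scope.
Local Open Scope ring_scope.

Section CurveClasses.
Variable r : nat.
Implicit Types (b c x y : 'rV[int]_r) (k : nat).

Lemma deg_is_zmod_morphism (omega : 'rV[int]_r) : zmod_morphism (deg omega).
Proof. by move=> x y; rewrite /deg -sumrB; apply: eq_bigr => i _; rewrite !mxE mulrBr. Qed.

HB.instance Definition _ omega :=
  GRing.isZmodMorphism.Build _ _ (deg omega) (deg_is_zmod_morphism omega).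

Lemma pairing_is_zmod_morphism (F : numFieldType) (alpha : 'rV[F]_r) :
  zmod_morphism (pairing alpha).
Proof.
by move=> x y; rewrite /pairing -sumrB; apply: eq_bigr => i _; rewrite !mxE intrB mulrBr.
Qed.

HB.instance Definition _ F alpha :=
  GRing.isZmodMorphism.Build _ _ (@pairing F r alpha) (pairing_is_zmod_morphism alpha).

Lemma degD omega x y : deg omega (x + y) = deg omega x + deg omega y.
Proof. exact: raddfD. Qed.

Lemma degMn omega b k : deg omega (b *+ k) = deg omega b *+ k.
Proof. exact: raddfMn. Qed.

Lemma degB omega x y : deg omega (x - y) = deg omega x - deg omega y.
Proof. exact: raddfB. Qed.

Lemma pairingD (F : numFieldType) (alpha : 'rV[F]_r) x y :
  pairing alpha (x + y) = pairing alpha x + pairing alpha y.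
Proof. exact: raddfD. Qed.

Lemma pairingMn (F : numFieldType) (alpha : 'rV[F]_r) x k :
  pairing alpha (x *+ k) = pairing alpha x *+ k.
Proof. exact: raddfMn. Qed.

Lemma cposE omega b : cpos omega b <-> 0 < deg omega b.
Proof.
split=> [[] //| deg_gt0]; split=> //; apply: contraTneq deg_gt0 => ->.
by rewrite raddf0.
Qed.

Lemma intz_mulrn (z : int) k : z *+ k = z * k%:Z.
Proof. by rewrite -natz mulr_natr. Qed.

Lemma divv_mulrn k c : (0 < k)%N -> divv k (c *+ k) = c.
Proof.
move=> k_gt0; apply/rowP => i; rewrite !mxE mulmxnE intz_mulrn mulzK //.
by rewrite eqz_nat -lt0n.
Qed.

Lemma divvK k b : dvdv k b -> divv k b *+ k = b.
Proof. by move=> kb; apply/rowP => i; rewrite mulmxnE mxE intz_mulrn divzK. Qed.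

Lemma dvdv_mulrn k c : dvdv k (c *+ k).
Proof. by move=> i; rewrite mulmxnE intz_mulrn dvdz_mull. Qed.

Lemma vec_mulrnI k x y : (0 < k)%N -> x *+ k = y *+ k -> x = y.
Proof. by move=> k_gt0 e; rewrite -(divv_mulrn x k_gt0) e divv_mulrn. Qed.

Lemma divv_cpos omega k c : (0 < k)%N -> dvdv k c -> cpos omega c ->
  cpos omega (divv k c).
Proof.
move=> k_gt0 kc; rewrite !cposE -{1}(divvK kc) degMn intz_mulrn.
by rewrite pmulr_lgt0 // ltz_nat.
Qed.

End CurveClasses.

Section FiniteSupportSums.
Variables (R : Type) (idx : R) (op : Monoid.com_law idx).

Lemma fsbig_fibers (I J : choiceType) (A : set I) (B : set J) (phi : J -> I)
    (F : I -> J -> R) :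
  finite_set [set j | B j /\ A (phi j)] ->
  \big[op/idx]_(i \in A) \big[op/idx]_(j \in [set j | B j /\ phi j = i]) F i j
  = \big[op/idx]_(j \in [set j | B j /\ A (phi j)]) F (phi j) j.
Proof.
set C := [set j | _ /\ _] => Cfin.
have phiCfin : finite_set (phi @` C) by apply: finite_image.
rewrite -(fsbig_widen (phi @` C) A); first last.
- move=> i [Ai phiCi]; apply: fsbig1 => j [Bj phij]; case: phiCi.
  by exists j => //; rewrite /C /= phij.
- by move=> _ [j [_ Aj] <-].
transitivity (\big[op/idx]_(i \in phi @` C) \big[op/idx]_(j \in C)
   (if j \in [set j | phi j = i] then F i j else idx)).
  apply: eq_fsbigr => i; rewrite in_setE => -[j0 [_ Aj0] <-].
  rewrite -fsbig_mkcondr; apply: eq_fsbigl; apply/seteqP; split.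
    by move=> j /= [Bj e]; rewrite /C /= e.
  by move=> j [[Bj _] /= <-].
rewrite exchange_fsbig //; apply: eq_fsbigr => j Cj.
rewrite -[RHS](fsbig_set1 op (phi j) (fun i => F i j)).
rewrite -[in RHS](setIidr (_ : [set phi j] `<=` phi @` C)); last first.
  by move=> _ ->; exists j => //; apply: set_mem.
rewrite [RHS]fsbig_mkcondr; apply: eq_fsbigr => i _.
case: (pselect (phi j = i)) => [<-|ne]; first by rewrite !ifT //; apply: mem_set.
by rewrite !ifF //; apply/negbTE/negP => /set_mem //= e; apply: ne.
Qed.

Lemma fsbig_sigma (I J : choiceType) (A : set I) (B : I -> set J)
    (F : I -> J -> R) :
  finite_set [set p : I * J | A p.1 /\ B p.1 p.2] ->
  \big[op/idx]_(i \in A) \big[op/idx]_(j \in B i) F i j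
  = \big[op/idx]_(p \in [set p : I * J | A p.1 /\ B p.1 p.2]) F p.1 p.2.
Proof.
move=> Sfin.
have -> : [set p : I * J | A p.1 /\ B p.1 p.2] = [set p | B p.1 p.2 /\ A p.1].
  by apply/seteqP; split=> -[i j] [].
rewrite -(fsbig_fibers (B := [set p : I * J | B p.1 p.2]) (phi := fst)
  (fun i p => F i p.2)); last by apply: sub_finite_set Sfin => -[i j] [].
apply: eq_fsbigr => i _; rewrite (reindex_fsbig (pair i) (B i)) //.
split=> [j Bj //|j1 j2 _ _ [] //|[i' j] /= [Bj <-]]; by exists j.
Qed.

End FiniteSupportSums.

Section NatUnimodular.
Local Open Scope nat_scope.

Definition mat2 := ((nat * nat) * (nat * nat))%type.
Implicit Types M N : mat2.

Definition unimodular M : Prop := M.1.1 * M.2.2 = M.1.2 * M.2.1 + 1.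
Definition mat2_1 : mat2 := ((1, 0), (0, 1)).
Definition rowsums M : nat * nat := (M.1.1 + M.1.2, M.2.1 + M.2.2).

(* Right multiplication by the generators (1 1; 0 1) and (1 0; 1 1) of the
   monoid SL_2(N). *)
Definition mul_up M : mat2 := ((M.1.1, M.1.2 + M.1.1), (M.2.1, M.2.2 + M.2.1)).
Definition mul_low M : mat2 := ((M.1.1 + M.1.2, M.1.2), (M.2.1 + M.2.2, M.2.2)).

Lemma unimodular_gt0 M : unimodular M -> 0 < M.1.1 /\ 0 < M.2.2.
Proof. by case: M => [[a b] [c d]]; rewrite /unimodular /=; nia. Qed.

Lemma unimodular_mul_up M : unimodular (mul_up M) <-> unimodular M.
Proof. by case: M => [[a b] [c d]]; rewrite /unimodular /=; nia. Qed.

Lemma unimodular_mul_low M : unimodular (mul_low M) <-> unimodular M.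
Proof. by case: M => [[a b] [c d]]; rewrite /unimodular /=; nia. Qed.

Lemma mul_up_inj : injective mul_up.
Proof. by move=> [[a b] [c d]] [[a' b'] [c' d']] [] *; f_equal; f_equal; lia. Qed.

Lemma mul_low_inj : injective mul_low.
Proof. by move=> [[a b] [c d]] [[a' b'] [c' d']] [] *; f_equal; f_equal; lia. Qed.

Lemma mul_up_neq1 M : mul_up M <> mat2_1.
Proof. by case: M => [[a b] [c d]] [] *; lia. Qed.

Lemma mul_low_neq1 M : mul_low M <> mat2_1.
Proof. by case: M => [[a b] [c d]] [] *; lia. Qed.

Lemma mul_up_neq_low M N : unimodular N -> mul_up M <> mul_low N.
Proof.
case: M N => [[a b] [c d]] [[a' b'] [c' d']] /unimodular_gt0 /= [a'_gt0 _] [].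
lia.
Qed.

Lemma unimodular_cases M : unimodular M ->
  [\/ M = mat2_1, exists2 N, unimodular N & M = mul_up N
    | exists2 N, unimodular N & M = mul_low N].
Proof.
case: M => [[a b] [c d]] uM; rewrite /unimodular /= in uM.
have [le_ab|lt_ba] := leqP a b.
  have [le_cd|lt_dc] := leqP c d.
    apply: Or32; exists ((a, b - a), (c, d - c)); last by rewrite /mul_up /= !subnK.
    by rewrite -unimodular_mul_up /mul_up /unimodular /= !subnK.
  have : a * d <= b * c by apply: leq_mul; lia.
  lia.
have [le_dc|lt_cd] := leqP d c.
  apply: Or33; exists ((a - b, b), (c - d, d)); last by rewrite /mul_low /= !subnK //; lia.
  by rewrite -unimodular_mul_low /mul_low /unimodular /= !subnK //; lia.
have [-> ->] : b = 0 /\ c = 0 by nia.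
have [-> ->] : a = 1 /\ d = 1 by nia.
exact: Or31.
Qed.

Lemma unimodular_rowsums M : unimodular M ->
  M.1.1 * (rowsums M).2 = M.2.1 * (rowsums M).1 + 1.
Proof. by case: M => [[a b] [c d]]; rewrite /unimodular /=; nia. Qed.

Lemma rowsums_coprime M : unimodular M -> coprime (rowsums M).1 (rowsums M).2.
Proof.
case: M => [[a b] [c d]] uM; have [/= a_gt0 _] := unimodular_gt0 uM.
apply/coprimeP; first by rewrite /=; lia.
by exists (d, b); rewrite /unimodular /= in uM *; nia.
Qed.

Lemma rowsums_inj M N : unimodular M -> unimodular N -> rowsums M = rowsums N -> M = N.
Proof.
move=> uM uN eMN.
suff [eM11 eM21] : M.1.1 = N.1.1 /\ M.2.1 = N.2.1.
  move: eMN eM11 eM21; case: M N {uM uN} => [[a b] [c d]] [[a' b'] [c' d']] /= [] *.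
  by f_equal; f_equal; lia.
wlog le_NM : M N uM uN eMN / N.1.1 <= M.1.1.
  move=> wlogH; have [/wlogH|/ltnW/wlogH] := leqP N.1.1 M.1.1; first exact.
  by case=> // -> ->.
have cop := rowsums_coprime uM; have [N11_gt0 _] := unimodular_gt0 uN.
have := unimodular_rowsums uN; have := unimodular_rowsums uM; rewrite -eMN.
move: le_NM cop N11_gt0 eMN; clear uM uN.
case: M => [[a b] [c d]]; case: N => [[a' b'] [c' d']] /=.
set k1 := a + b; set k2 := c + d => le_a'a cop a'_gt0 _ Ea Ea'.
have le_cc' : c' <= c.
  by rewrite -(leq_pmul2r (_ : 0 < k1)); [nia | rewrite /k1; lia].
have : k1 %| a - a'.
  by rewrite -(Gauss_dvdl _ cop) mulnBl Ea Ea' subnDr -mulnBl dvdn_mull.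
have [aa'0 _|aa'_gt0] := posnP (a - a'); last first.
  by move/(dvdn_leq aa'_gt0); rewrite /k1; lia.
have ea : a = a' by lia.
split=> //; apply/eqP; rewrite -(eqn_pmul2r (_ : 0 < k1)); last by rewrite /k1; lia.
by apply/eqP; rewrite ea in Ea; lia.
Qed.

Lemma rowsums_surj k1 k2 : 0 < k1 -> 0 < k2 -> coprime k1 k2 ->
  exists2 M, unimodular M & rowsums M = (k1, k2).
Proof.
move=> k1_gt0 k2_gt0 cop.
have [a lt_a_k1] := Bezoutl k2 k1_gt0; rewrite (eqP cop) => dvd_k1.
set t := (1 + a * k2) %/ k1.
have et : t * k1 = 1 + a * k2 by rewrite divnK.
have le_t_k2 : t <= k2.
  rewrite -(leq_pmul2r k1_gt0) et.
  have : a * k2 <= (k1 - 1) * k2 by rewrite leq_mul2r; lia.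
  by rewrite mulnBl mul1n mulnC; lia.
exists ((k1 - a, a), (k2 - t, t)); last by rewrite /rowsums /=; congr pair; lia.
rewrite /unimodular /= !mulnBl !mulnBr (mulnC k1 t) et.
have : a * t <= a * k2 by rewrite leq_mul2l le_t_k2 orbT.
lia.
Qed.

End NatUnimodular.

Section TwoClassCombinations.
Variable Z : nmodType.
Implicit Types (g : Z * Z) (M : mat2).

Definition vmul g M : Z * Z :=
  (g.1 *+ M.1.1 + g.2 *+ M.2.1, g.1 *+ M.1.2 + g.2 *+ M.2.2).

Lemma vmul1 g : vmul g mat2_1 = g.
Proof. by case: g => x y; rewrite /vmul /= !mulr1n !mulr0n addr0 add0r. Qed.

Lemma vmul_mul_up g M :
  vmul g (mul_up M) = ((vmul g M).1, (vmul g M).2 + (vmul g M).1).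
Proof. by rewrite /vmul /= !mulrnDr addrACA. Qed.

Lemma vmul_mul_low g M :
  vmul g (mul_low M) = ((vmul g M).1 + (vmul g M).2, (vmul g M).2).
Proof. by rewrite /vmul /= !mulrnDr addrACA. Qed.

Lemma vmul_rowsums g M :
  (vmul g M).1 + (vmul g M).2 = g.1 *+ (rowsums M).1 + g.2 *+ (rowsums M).2.
Proof. by rewrite /vmul /= !mulrnDr addrACA. Qed.

End TwoClassCombinations.

Lemma raddf_vmul (Z W : nmodType) (f : {additive Z -> W}) (g : Z * Z) M :
  (f (vmul g M).1, f (vmul g M).2) = vmul (f g.1, f g.2) M.
Proof. by rewrite /vmul /= !raddfD !raddfMn. Qed.

Lemma vmul_mul_upE (Z : zmodType) (g : Z * Z) M x y :
  vmul g (mul_up M) = (x, y) <-> vmul g M = (x, y - x).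
Proof.
rewrite vmul_mul_up; case: (vmul g M) => v1 v2 /=.
by split=> -[-> e]; [rewrite -e addrK | rewrite e subrK].
Qed.

Lemma vmul_mul_lowE (Z : zmodType) (g : Z * Z) M x y :
  vmul g (mul_low M) = (x, y) <-> vmul g M = (x - y, y).
Proof.
rewrite vmul_mul_low; case: (vmul g M) => v1 v2 /=.
by split=> [[e <-] | [-> ->]]; [rewrite -e addrK | rewrite subrK].
Qed.

Definition vmul_adj (Z : zmodType) (h : Z * Z) (M : mat2) : Z * Z :=
  (h.1 *+ M.2.2 - h.2 *+ M.2.1, h.2 *+ M.1.1 - h.1 *+ M.1.2).

Lemma vmulK (Z : zmodType) M :
  unimodular M -> cancel (fun g : Z * Z => vmul g M) (fun h => vmul_adj h M).
Proof.
case: M => [[a b] [c d]]; rewrite /unimodular /= => uM [x y].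
rewrite /vmul_adj /vmul /= !mulrnDl -!mulrnA (mulnC d c) (mulnC d a) (mulnC b a).
rewrite (mulnC c b) uM.
by congr pair; rewrite opprD addrACA subrr ?addr0 ?add0r -mulrnBr ?leq_addr // addKn.
Qed.

Lemma unimodular_weight (F : numFieldType) (w : F * F) M : unimodular M ->
  w.1 *+ (rowsums M).1 + w.2 *+ (rowsums M).2 = 0 ->
  w.1 *+ (rowsums M).1 * (w.2 *+ (rowsums M).2)
    / (((rowsums M).1 ^ 2 * (rowsums M).2 ^ 2)%N)%:R
  = (vmul w M).1 * (vmul w M).2.
Proof.
case: M w => [[a b] [c d]] [w1 w2] uM; have [/= a_gt0 d_gt0] := unimodular_gt0 uM.
rewrite /unimodular /= in uM.
rewrite /rowsums /vmul /= -!(mulr_natr w1) -!(mulr_natr w2) natrM !natrX.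
have det1 : a%:R * (c + d)%:R - c%:R * (a + b)%:R = 1 :> F.
  have e : (a * (c + d) = c * (a + b) + 1)%N by nia.
  by rewrite -!natrM e natrD addrAC subrr add0r.
have det2 : b%:R * (c + d)%:R - d%:R * (a + b)%:R = -1 :> F.
  have e : (d * (a + b) = b * (c + d) + 1)%N by nia.
  by rewrite -!natrM e natrD opprD addrA subrr add0r.
have k1_neq0 : (a + b)%:R != 0 :> F by rewrite pnatr_eq0; lia.
have k2_neq0 : (c + d)%:R != 0 :> F by rewrite pnatr_eq0; lia.
move: det1 det2 k1_neq0 k2_neq0; set k1 := (a + b)%:R; set k2 := (c + d)%:R.
clearbody k1 k2 => det1 det2 k1_neq0 k2_neq0.
move=> /eqP; rewrite addr_eq0 => /eqP ew2.
have -> : w2 = - (w1 * k1) / k2 by rewrite ew2 opprK mulfK.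
transitivity (w1 / k2 * (a%:R * k2 - c%:R * k1) * (w1 / k2 * (b%:R * k2 - d%:R * k1))).
  by rewrite det1 det2; field; rewrite k1_neq0 k2_neq0.
by field.
Qed.

Lemma gpair0l (F : numFieldType) p (G : 'M[int]_p) (x y : 'I_p -> F) :
  (forall a, x a = 0) -> gpair G x y = 0.
Proof. by move=> x0; apply: big1 => a _; apply: big1 => b _; rewrite x0 !mul0r. Qed.

Lemma gpair0r (F : numFieldType) p (G : 'M[int]_p) (x y : 'I_p -> F) :
  (forall b, y b = 0) -> gpair G x y = 0.
Proof. by move=> y0; apply: big1 => a _; apply: big1 => b _; rewrite y0 mulr0. Qed.

Section Decompositions.
Variables (r : nat) (omega : 'rV[int]_r).
Local Notation V := 'rV[int]_r.
Local Notation deg := (deg omega).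
Local Notation cpos := (cpos omega).
Implicit Types (x y : V) (g : V * V) (M : mat2) (S : set V).

Definition noncollinear x y :=
  exists i j, x ord0 i * y ord0 j - x ord0 j * y ord0 i != 0.

Lemma noncollinear_neq x y : noncollinear x y -> x <> y.
Proof. by move=> [i [j]] + exy; rewrite exy mulrC subrr eqxx. Qed.

Lemma noncollinear_up x y : noncollinear x y -> noncollinear x (y - x).
Proof.
move=> [i [j minor_neq0]]; exists i, j; rewrite !mxE.
by have -> : x ord0 i * (y ord0 j - x ord0 j) - x ord0 j * (y ord0 i - x ord0 i)
           = x ord0 i * y ord0 j - x ord0 j * y ord0 i by ring.
Qed.

Lemma noncollinear_low x y : noncollinear x y -> noncollinear (x - y) y.
Proof.
move=> [i [j minor_neq0]]; exists i, j; rewrite !mxE.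
by have -> : (x ord0 i - y ord0 i) * y ord0 j - (x ord0 j - y ord0 j) * y ord0 i
           = x ord0 i * y ord0 j - x ord0 j * y ord0 i by ring.
Qed.

Lemma deg_vmul g M :
  (deg (vmul g M).1, deg (vmul g M).2) = vmul (deg g.1, deg g.2) M.
Proof. exact: (raddf_vmul deg). Qed.

Lemma vmul_cpos g M : cpos g.1 -> cpos g.2 -> unimodular M ->
  cpos (vmul g M).1 /\ cpos (vmul g M).2.
Proof.
move=> /cposE g1_gt0 /cposE g2_gt0 /unimodular_gt0 [a_gt0 d_gt0].
rewrite !cposE; case: (deg_vmul g M) => -> ->; rewrite /vmul /= !intz_mulrn.
by split; nia.
Qed.

Definition mat2_box (K : nat) : set mat2 := (`I_K `*` `I_K) `*` (`I_K `*` `I_K).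

Lemma finite_mat2_box K : finite_set (mat2_box K).
Proof. by do !apply: finite_setX; apply: finite_II. Qed.

Lemma vmul_in_box g M (K : nat) : cpos g.1 -> cpos g.2 ->
  deg (vmul g M).1 < K%:Z -> deg (vmul g M).2 < K%:Z -> mat2_box K M.
Proof.
move=> /cposE g1_gt0 /cposE g2_gt0; case: (deg_vmul g M) => -> ->.
by rewrite /vmul /= !intz_mulrn => lt1 lt2; do !split; rewrite /= /mkset; nia.
Qed.

Definition admissible S : set (mat2 * (V * V)) :=
  [set Mg | unimodular Mg.1 /\ S Mg.2.1 /\ S Mg.2.2].

Definition decomps S bb : set (mat2 * (V * V)) :=
  [set Mg | admissible S Mg /\ vmul Mg.2 Mg.1 = bb].

Lemma finite_decomps S bb : S `<=` cpos -> finite_set (decomps S bb).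
Proof.
move=> Spos; set K := (`|deg bb.1| + `|deg bb.2|).+1.
apply: (sub_finite_set _ (finite_image (fun M => (M, vmul_adj bb M)) (finite_mat2_box K))).
move=> [M g] [[uM [/Spos g1 /Spos g2]] /= e]; exists M; last by rewrite -e vmulK.
apply: (vmul_in_box g1 g2); rewrite e /K.
  by move: (ler_norm (deg bb.1)); rewrite -abszE; lia.
by move: (ler_norm (deg bb.2)); rewrite -abszE; lia.
Qed.

Lemma decomps_nonpos S bb : S `<=` cpos ->
  deg bb.1 <= 0 \/ deg bb.2 <= 0 -> decomps S bb = set0.
Proof.
move=> Spos nonpos; apply/seteqP; split=> // -[M g] [[uM [/Spos g1 /Spos g2]] /= e].
have := vmul_cpos g1 g2 uM; rewrite e => -[/cposE pos1 /cposE pos2].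
by case: nonpos; rewrite leNgt ?pos1 ?pos2.
Qed.

Lemma decomps_rec S x y : S x -> S y ->
  decomps S (x, y) = [set (mat2_1, (x, y))]
    `|` ((fun Mg => (mul_up Mg.1, Mg.2)) @` decomps S (x, y - x)
    `|` (fun Mg => (mul_low Mg.1, Mg.2)) @` decomps S (x - y, y)).
Proof.
move=> Sx Sy; apply/seteqP; split=> [[M g] [[uM Sg] /= e] | Mg].
  move: e; case: (unimodular_cases (uM : unimodular M)) => [-> | [N uN ->] | [N uN ->]] e.
  - by left; rewrite vmul1 in e; rewrite e.
  - by right; left; exists (N, g) => //; split; [split | apply/vmul_mul_upE].
  - by right; right; exists (N, g) => //; split; [split | apply/vmul_mul_lowE].
case=> [-> | [[[N g] [[uN Sg] /= e] <-] | [[N g] [[uN Sg] /= e] <-]]].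
- by split; [split | exact: vmul1].
- by split; [split => //; apply/unimodular_mul_up | apply/vmul_mul_upE].
- by split; [split => //; apply/unimodular_mul_low | apply/vmul_mul_lowE].
Qed.

Lemma fsum_decomps (R : nmodType) S (h : V * V -> R) x y :
  S `<=` cpos -> S x -> S y ->
  \sum_(Mg \in decomps S (x, y)) h Mg.2 = h (x, y)
    + \sum_(Mg \in decomps S (x, y - x)) h Mg.2
    + \sum_(Mg \in decomps S (x - y, y)) h Mg.2.
Proof.
move=> Spos Sx Sy; have fin := finite_decomps _ Spos.
have lift_inj f bb : injective f -> set_inj (decomps S bb) (fun Mg => (f Mg.1, Mg.2)).
  by move=> f_inj [M g] [M' g'] _ _ [/f_inj -> ->].
rewrite decomps_rec // fsbigU0 ?fsbigU0 ?finite_setU; do ?split;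
  try exact: finite_image; try exact: finite_set1.
- rewrite fsbig_set1 !fsbig_image /=; first by rewrite addrA.
    exact: lift_inj mul_low_inj.
  exact: lift_inj mul_up_inj.
- move=> _ [[[N g] _ <-] [[N' g'] [[uN' _] _] /(congr1 fst) e]].
  exact: mul_up_neq_low uN' (esym e).
- by move=> _ [-> [[[N g] _ /(congr1 fst)/mul_up_neq1]
                   | [[N g] _ /(congr1 fst)/mul_low_neq1]]].
Qed.

End Decompositions.

Lemma pairing_vmul (F : numFieldType) r (alpha : 'rV[F]_r) (g : 'rV[int]_r * 'rV[int]_r) M :
  (pairing alpha (vmul g M).1, pairing alpha (vmul g M).2)
  = vmul (pairing alpha g.1, pairing alpha g.2) M.
Proof. exact: (raddf_vmul (pairing alpha)). Qed.

Lemma pairing_collinear (F : numFieldType) r (alpha : 'rV[F]_r) omega x y :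
  ~ noncollinear x y ->
  pairing alpha x * (deg omega y)%:~R = pairing alpha y * (deg omega x)%:~R.
Proof.
move=> col; have minor0 i j : x ord0 i * y ord0 j = x ord0 j * y ord0 i.
  by apply/eqP; rewrite -subr_eq0; apply/negPn/negP => minor_neq0; apply: col; exists i, j.
rewrite /pairing /deg !rmorph_sum !mulr_suml; apply: eq_bigr => i _.
rewrite !mulr_sumr; apply: eq_bigr => j _; rewrite !rmorphM /= -!mulrA; congr (_ * _).
rewrite mulrCA [RHS]mulrCA; congr (_ * _).
by rewrite -!intrM minor0 (mulrC (y ord0 i)).
Qed.

Section MultipleCovers.
Variables (F : numFieldType) (r p : nat) (omega : 'rV[int]_r).
Variables gw n : 'rV[int]_r -> 'I_p -> F.
Local Notation V := 'rV[int]_r.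
Local Notation deg := (deg omega).
Local Notation cpos := (cpos omega).

Definition covers (b : V) :=
  [set dc : nat * V | (0 < dc.1)%N /\ cpos dc.2 /\ dc.2 *+ dc.1 = b].

Definition supported (b : V) := cpos b /\ exists a, n b a != 0.

Hypothesis gromov_finite : forall D : int,
  finite_set [set b : V | cpos b /\ deg b <= D /\ exists a, gw b a != 0].
Hypothesis multiple_cover : forall b, cpos b -> forall a,
  gw b a = \sum_(dc \in covers b) (dc.1 ^ 2)%:R^-1 * n dc.2 a.

Lemma covers_deg b dc : covers b dc -> dc.1%:Z <= deg b /\ deg dc.2 <= deg b.
Proof.
case: dc => d c [/= d_gt0 [/cposE c_pos <-]]; rewrite degMn intz_mulrn.
by split; nia.
Qed.

Lemma n_neq0_gw_cover b a : cpos b -> n b a != 0 ->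
  exists2 dc, covers b dc & gw dc.2 a != 0.
Proof.
move=> b_pos nba; have : deg b <= `|deg b|%N%:Z by rewrite abszE ler_norm.
move: `|deg b|%N => N; elim: N b b_pos nba => [|N IH] b b_pos nba le_b_N.
  by move/cposE: b_pos; lia.
have [gw0|gwb] := eqVneq (gw b a) 0; first last.
  by exists (1%N, b) => //; split=> //; split=> //; apply: mulr1n.
have [[[d c] cover_dc /andP [/= d_neq1 nca]] | no_proper] :=
  pselect (exists2 dc, covers b dc & (dc.1 != 1%N) && (n dc.2 a != 0)).
  have [/= d_gt0 [c_pos e]] := cover_dc.
  have le_c_N : deg c <= N%:Z.
    by move: le_b_N (c_pos); rewrite -e degMn intz_mulrn => ? /cposE; nia.
  have [[d' c'] [/= d'_gt0 [c'_pos e']] gwc'] := IH c c_pos nca le_c_N.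
  exists (d' * d, c')%N => //.
  by split; [rewrite muln_gt0 d'_gt0 | split => //; rewrite mulrnA e' e].
move: gw0; rewrite multiple_cover // -(fsbig_widen [set (1%N, b)]) ?fsbig_set1 /=.
- by rewrite invr1 mul1r => /eqP; rewrite (negPf nba).
- by move=> _ ->; split => //; split => //; apply: mulr1n.
move=> [d c] [cover_dc /= not1]; apply/eqP; rewrite mulf_eq0 orbC; apply/orP; left.
apply/negPn/negP => nca; have [_ [_ e]] := cover_dc.
have [d1 | d_neq1] := eqVneq d 1%N; first by apply: not1; rewrite -e d1 mulr1n.
by apply: no_proper; exists (d, c) => //; rewrite /= d_neq1 nca.
Qed.

Lemma finite_supported (D : int) : finite_set [set b | supported b /\ deg b <= D].
Proof.
apply: (sub_finite_set _ (finite_image (fun dc : nat * V => dc.2 *+ dc.1)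
   (finite_setX (finite_II `|D|.+1) (gromov_finite D)))).
move=> b [[b_pos [a nba]] le_b_D].
have [[d c] cover_dc gwc] := n_neq0_gw_cover b_pos nba.
have [/= le_d_b le_c_b] := covers_deg cover_dc; have [_ [c_pos e]] := cover_dc.
exists (d, c); last exact: e.
split; rewrite /= /mkset; first by lia.
by split => //; split; [lia | exists a].
Qed.

End MultipleCovers.

Section MeetingInvariants.
Variables (F : numFieldType) (r p : nat) (omega : 'rV[int]_r) (G : 'M[int]_p).
Variables (n : 'rV[int]_r -> 'I_p -> F) (m : 'rV[int]_r -> 'rV[int]_r -> F).
Local Notation V := 'rV[int]_r.
Local Notation deg := (deg omega).
Local Notation cpos := (cpos omega).

Hypothesis m_nonpos : forall b1 b2, deg b1 <= 0 \/ deg b2 <= 0 -> m b1 b2 = 0.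
Hypothesis m_rec : forall b1 b2, cpos b1 -> cpos b2 -> b1 <> b2 ->
  m b1 b2 = gpair G (n b1) (n b2) + m b1 (b2 - b1) + m (b1 - b2) b2.

Lemma meeting_expansion x y : cpos x -> cpos y -> noncollinear x y ->
  m x y = \sum_(Mg \in decomps cpos (x, y)) gpair G (n Mg.2.1) (n Mg.2.2).
Proof.
have : deg x + deg y <= (absz (deg x + deg y))%:Z by rewrite abszE ler_norm.
move: (absz _) => N; elim: N x y => [|N IH] x y le_xy_N x_pos y_pos ncol.
  by move: x_pos y_pos => /cposE ? /cposE ?; lia.
rewrite m_rec //; last exact: noncollinear_neq ncol.
rewrite (fsum_decomps (omega := omega) (S := cpos) (fun g => gpair G (n g.1) (n g.2))) //.
move: x_pos y_pos => /cposE x_gt0 /cposE y_gt0.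
congr (_ + _ + _).
- have [yx_gt0 | yx_le0] := ltP 0 (deg (y - x)).
    apply: IH; rewrite ?cposE //; last exact: noncollinear_up.
    by rewrite degB; lia.
  have nonpos : deg x <= 0 \/ deg (y - x) <= 0 by right.
  by rewrite m_nonpos // (decomps_nonpos (bb := (x, y - x)) (fun _ => id)) // fsbig_set0.
- have [xy_gt0 | xy_le0] := ltP 0 (deg (x - y)).
    apply: IH; rewrite ?cposE //; last exact: noncollinear_low.
    by rewrite degB; lia.
  have nonpos : deg (x - y) <= 0 \/ deg y <= 0 by left.
  by rewrite m_nonpos // (decomps_nonpos (bb := (x - y, y)) (fun _ => id)) // fsbig_set0.
Qed.

End MeetingInvariants.

Section MeetingCoverIdentity.
Variables (F : numFieldType) (r p : nat) (omega : 'rV[int]_r) (G : 'M[int]_p).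
Variables (gw n : 'rV[int]_r -> 'I_p -> F) (m : 'rV[int]_r -> 'rV[int]_r -> F).
Variables (alpha : 'rV[F]_r) (beta : 'rV[int]_r).
Local Notation V := 'rV[int]_r.
Local Notation deg := (deg omega).
Local Notation cpos := (cpos omega).
Local Notation W := (pairing alpha).
Local Notation supported := (supported omega n).

Hypothesis gromov_finite : forall D : int,
  finite_set [set b : V | cpos b /\ deg b <= D /\ exists a, gw b a != 0].
Hypothesis multiple_cover : forall b, cpos b -> forall a,
  gw b a = \sum_(dc \in covers omega b) (dc.1 ^ 2)%:R^-1 * n dc.2 a.
Hypothesis m_nonpos : forall b1 b2, deg b1 <= 0 \/ deg b2 <= 0 -> m b1 b2 = 0.
Hypothesis m_rec : forall b1 b2, cpos b1 -> cpos b2 -> b1 <> b2 ->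
  m b1 b2 = gpair G (n b1) (n b2) + m b1 (b2 - b1) + m (b1 - b2) b2.
Hypothesis alpha_beta : W beta = 0.

Definition splittings :=
  [set bb : V * V | bb.1 + bb.2 = beta /\ cpos bb.1 /\ cpos bb.2].

Definition unimodular_splittings :=
  [set Mg | admissible supported Mg /\ splittings (vmul Mg.2 Mg.1)].

Definition pairing_weight (g : V * V) (M : mat2) :=
  W (vmul g M).1 * W (vmul g M).2 * gpair G (n g.1) (n g.2).

Lemma splitting_collinear bb : splittings bb -> ~ noncollinear bb.1 bb.2 -> W bb.1 = 0.
Proof.
move=> [sum_beta [/cposE pos1 /cposE pos2]] /(pairing_collinear alpha).
have -> : W bb.2 = - W bb.1.
  by apply/eqP; rewrite -addr_eq0 addrC -pairingD sum_beta alpha_beta.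
move=> e; have /eqP : W bb.1 * (deg bb.2 + deg bb.1)%:~R = 0.
  by rewrite intrD mulrDr e mulNr addNr.
by rewrite mulf_eq0 intr_eq0 => /orP[/eqP // | /eqP]; lia.
Qed.

Lemma finite_unimodular_splittings : finite_set unimodular_splittings.
Proof.
set D := deg beta; set K := (absz D).+1.
have fin := finite_supported gromov_finite multiple_cover D.
apply: (sub_finite_set _ (finite_setX (finite_mat2_box K) (finite_setX fin fin))).
move=> [M [g1 g2]] [[/= uM [[g1_pos n1] [g2_pos n2]]]].
have := deg_vmul omega (g1, g2) M.
have := vmul_in_box (g := (g1, g2)) (M := M) (K := K) g1_pos g2_pos.
case: (vmul _ M) => v1 v2 /= inK [e1 e2] [sum_beta [/cposE v1_gt0 /cposE v2_gt0]].
rewrite /= in sum_beta v1_gt0 v2_gt0.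
have sum_D : deg v1 + deg v2 = D by rewrite -degD sum_beta.
have le_D : D <= (absz D)%:Z by rewrite abszE ler_norm.
split; first by apply: inK; rewrite /K; lia.
move: v1_gt0 v2_gt0 sum_D; rewrite e1 e2 /= !intz_mulrn => v1_gt0 v2_gt0 sum_D.
have [a_gt0 d_gt0] := unimodular_gt0 uM; move: (g1_pos) (g2_pos) => /cposE ? /cposE ?.
by split; split; [split | nia | split | nia].
Qed.

Lemma gpair_unsupported x y : cpos x -> cpos y -> ~ (supported x /\ supported y) ->
  gpair G (n x) (n y) = 0.
Proof.
move=> x_pos y_pos not_supp; have [[_ [a nxa]] | not_x] := pselect (supported x).
  apply: gpair0r => b; apply/eqP/negPn/negP => nyb.
  by apply: not_supp; split; [split => //; exists a | split => //; exists b].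
apply: gpair0l => a; apply/eqP/negPn/negP => nxa.
by apply: not_x; split => //; exists a.
Qed.

Lemma meeting_sum :
  \sum_(bb \in splittings) W bb.1 * W bb.2 * m bb.1 bb.2
  = \sum_(Mg \in unimodular_splittings) pairing_weight Mg.2 Mg.1.
Proof.
rewrite /pairing_weight -(fsbig_fibers _ (A := splittings) (B := admissible supported)
  (phi := fun Mg => vmul Mg.2 Mg.1)
  (fun bb Mg => W bb.1 * W bb.2 * gpair G (n Mg.2.1) (n Mg.2.2))); last first.
  exact: finite_unimodular_splittings.
apply: eq_fsbigr => bb; rewrite in_setE => bb_split.
have [_ [pos1 pos2]] := bb_split.
have [ncol | col] := pselect (noncollinear bb.1 bb.2); last first.
  by rewrite splitting_collinear // !mul0r fsbig1 // => Mg _; rewrite !mul0r.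
rewrite [bb]surjective_pairing (meeting_expansion m_nonpos m_rec) //= -mulr_fsumr.
congr (_ * _); apply: esym; apply: fsbig_widen.
  by move=> [M g] [[uM [[g1_pos _] [g2_pos _]]] e]; split.
move=> [M g] [[[uM [g1_pos g2_pos]] e] not_supp] /=; apply: gpair_unsupported => //.
by move=> [g1_supp g2_supp]; apply: not_supp.
Qed.

Definition coprime_pairs :=
  [set k : nat * nat | (0 < k.1)%N /\ (0 < k.2)%N /\ coprime k.1 k.2].

Definition div_splittings (k : nat * nat) :=
  [set bb : V * V | bb.1 + bb.2 = beta /\ cpos bb.1 /\ cpos bb.2
                    /\ dvdv k.1 bb.1 /\ dvdv k.2 bb.2].

Definition cover_term (k : nat * nat) (bb : V * V) :=
  W bb.1 * W bb.2 / ((k.1 ^ 2 * k.2 ^ 2)%N)%:R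
  * gpair G (n (divv k.1 bb.1)) (n (divv k.2 bb.2)).

Definition supported_div_splittings :=
  [set q : (nat * nat) * (V * V) | coprime_pairs q.1 /\ div_splittings q.1 q.2
     /\ supported (divv q.1.1 q.2.1) /\ supported (divv q.1.2 q.2.2)].

Definition scale_by_rowsums (Mg : mat2 * (V * V)) : (nat * nat) * (V * V) :=
  (rowsums Mg.1, (Mg.2.1 *+ (rowsums Mg.1).1, Mg.2.2 *+ (rowsums Mg.1).2)).

Lemma scaled_div_splitting k1 k2 g1 g2 : (0 < k1)%N -> (0 < k2)%N -> coprime k1 k2 ->
  supported g1 -> supported g2 -> g1 *+ k1 + g2 *+ k2 = beta ->
  supported_div_splittings ((k1, k2), (g1 *+ k1, g2 *+ k2)).
Proof.
move=> k1_gt0 k2_gt0 cop g1_supp g2_supp sum_beta.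
have mulrn_pos k g : (0 < k)%N -> cpos g -> cpos (g *+ k).
  by move=> k_gt0; rewrite !cposE degMn intz_mulrn => g_gt0; rewrite pmulr_lgt0 ?ltz_nat.
rewrite /supported_div_splittings /= !divv_mulrn //.
have [[g1_pos _] [g2_pos _]] := (g1_supp, g2_supp).
split; first by do !split.
split; last by [].
split; first exact: sum_beta.
do 2 (split; first exact: mulrn_pos).
by split; apply: dvdv_mulrn.
Qed.

Lemma scale_by_rowsums_bij :
  set_bij unimodular_splittings supported_div_splittings scale_by_rowsums.
Proof.
split.
- move=> [M [g1 g2]] [[/= uM [g1_supp g2_supp]] [sum_beta _]].
  have [a_gt0 d_gt0] := unimodular_gt0 uM.
  have k1_gt0 : (0 < (rowsums M).1)%N by rewrite /rowsums /=; lia.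
  have k2_gt0 : (0 < (rowsums M).2)%N by rewrite /rowsums /=; lia.
  apply: (scaled_div_splitting k1_gt0 k2_gt0 (rowsums_coprime uM) g1_supp g2_supp).
  by rewrite -sum_beta (vmul_rowsums (g1, g2) M).
- move=> [M [g1 g2]] [M' [g1' g2']] /set_mem [[/= uM _] _] /set_mem [[/= uM' _] _].
  rewrite /scale_by_rowsums => e; have eM : M = M' := rowsums_inj uM uM' (congr1 fst e).
  have [a_gt0 d_gt0] := unimodular_gt0 uM.
  move/(congr1 snd): e; rewrite -eM => -[e1 e2].
  congr (_, (_, _)); apply: vec_mulrnI; [| exact: e1 | | exact: e2].
    by rewrite /rowsums /=; lia.
  by rewrite /rowsums /=; lia.
- move=> [[k1 k2] [b1 b2]] [[/= k1_gt0 [k2_gt0 cop]]].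
  move=> [[/= sum_beta [_ [_ [dv1 dv2]]]] [supp1 supp2]].
  have [M uM eM] := rowsums_surj k1_gt0 k2_gt0 cop.
  exists (M, (divv k1 b1, divv k2 b2)); last by rewrite /scale_by_rowsums eM /= !divvK.
  have [v1_pos v2_pos] := vmul_cpos (g := (divv k1 b1, divv k2 b2)) supp1.1 supp2.1 uM.
  split; first by split.
  split; last by split.
  by rewrite vmul_rowsums eM /= !divvK.
Qed.

Lemma cover_term_scale Mg : unimodular_splittings Mg ->
  cover_term (scale_by_rowsums Mg).1 (scale_by_rowsums Mg).2 = pairing_weight Mg.2 Mg.1.
Proof.
case: Mg => M [g1 g2] [[/= uM _] [sum_beta _]]; have [a_gt0 d_gt0] := unimodular_gt0 uM.
have k1_gt0 : (0 < (rowsums M).1)%N by rewrite /rowsums /=; lia.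
have k2_gt0 : (0 < (rowsums M).2)%N by rewrite /rowsums /=; lia.
rewrite /cover_term /pairing_weight /scale_by_rowsums !divv_mulrn //; congr (_ * _).
have [-> ->] : W (vmul (g1, g2) M).1 = (vmul (W g1, W g2) M).1
            /\ W (vmul (g1, g2) M).2 = (vmul (W g1, W g2) M).2.
  by rewrite -(pairing_vmul alpha (g1, g2) M).
rewrite !pairingMn; apply: (unimodular_weight (w := (W g1, W g2)) uM).
by rewrite -!pairingMn -pairingD -(vmul_rowsums (g1, g2) M) sum_beta alpha_beta.
Qed.

Lemma cover_sum :
  \sum_(k \in coprime_pairs) \sum_(bb \in div_splittings k) cover_term k bb
  = \sum_(Mg \in unimodular_splittings) pairing_weight Mg.2 Mg.1.
Proof.
have [_ _ surj] := scale_by_rowsums_bij.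
have fin : finite_set supported_div_splittings.
  exact: sub_finite_set surj (finite_image _ finite_unimodular_splittings).
transitivity (\sum_(k \in coprime_pairs) \sum_(bb \in [set bb | div_splittings k bb
    /\ supported (divv k.1 bb.1) /\ supported (divv k.2 bb.2)]) cover_term k bb).
  apply: eq_fsbigr => k; rewrite in_setE => -[k1_gt0 [k2_gt0 _]].
  apply/esym/fsbig_widen => [bb [] //|[b1 b2] [split_bb not_supp]].
  have [/= _ [b1_pos [b2_pos [dv1 dv2]]]] := split_bb.
  rewrite /cover_term /= gpair_unsupported ?mulr0 //; try exact: divv_cpos.
  by move=> supp; apply: not_supp.
rewrite (fsbig_sigma _ (A := coprime_pairs)) //.
rewrite (reindex_fsbig scale_by_rowsums unimodular_splittings); last first.
  exact: scale_by_rowsums_bij.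
by apply: eq_fsbigr => Mg; rewrite in_setE => /cover_term_scale.
Qed.

End MeetingCoverIdentity.

Unset Implicit Arguments.

Theorem lemma2p3 (F : numFieldType) (r p : nat)
  (omega : 'rV[int]_r)                      (* ample class *)
  (cup : 'I_r -> 'I_r -> 'rV[F]_p)          (* cup product H^2 x H^2 -> H^4 *)
  (G : 'M[int]_p)                           (* g_ab = int_X S_a S_b *)
  (c2 : 'rV[int]_p)                         (* c_2(X) mod torsion *)
  (gw : 'rV[int]_r -> 'I_p -> F)            (* gw b a = GW_{0,b}(S_a) *)
  (n : 'rV[int]_r -> 'I_p -> F)             (* n b a = n_{0,b}(S_a) *)
  (m : 'rV[int]_r -> 'rV[int]_r -> F)       (* meeting invariants *)
  (alpha : 'rV[F]_r) (beta : 'rV[int]_r) :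
  (* Poincare duality: intersection form on free part of H^4 *)
  G^T = G -> G \in unitmx ->
  (* Gromov compactness: finitely many classes of bounded degree carry
     nonzero genus 0 invariants *)
  (forall D : int, finite_set
     [set b : 'rV[int]_r | cpos omega b /\ deg omega b <= D /\
                          exists a, gw b a != 0]) ->
  (* definition of n_{0,b} via the multiple cover formula *)
  (forall b, cpos omega b -> forall a,
     gw b a = \sum_(dc \in [set dc : nat * 'rV[int]_r |
                    (0 < dc.1)%N /\ cpos omega dc.2 /\ dc.2 *+ dc.1 = b])
                (dc.1 ^ 2)%:R^-1 * n dc.2 a) ->
  (* characterization of the meeting invariants *)
  (forall b1 b2, m b1 b2 = m b2 b1) ->
  (forall b1 b2, deg omega b1 <= 0 \/ deg omega b2 <= 0 -> m b1 b2 = 0) ->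
  (forall b1 b2, cpos omega b1 -> cpos omega b2 -> b1 <> b2 ->
     m b1 b2 = gpair G (n b1) (n b2) + m b1 (b2 - b1) + m (b1 - b2) b2) ->
  (forall b, cpos omega b ->
     m b b = linH4 (n b) (map_mx (fun z : int => z%:~R) c2)
             + gpair G (n b) (n b)
             - \sum_(bb \in [set bb : 'rV[int]_r * 'rV[int]_r |
                      bb.1 + bb.2 = b /\ cpos omega bb.1 /\ cpos omega bb.2])
                 m bb.1 bb.2) ->
  (* alpha . beta = 0 *)
  pairing alpha beta = 0 ->
  (linH4 (n beta) (sq_class cup alpha)
     = 2^-1 * \sum_(bb \in [set bb : 'rV[int]_r * 'rV[int]_r |
                   bb.1 + bb.2 = beta /\ cpos omega bb.1 /\ cpos omega bb.2])
                (pairing alpha bb.1 * pairing alpha bb.2 * m bb.1 bb.2))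
  <->
  (linH4 (n beta) (sq_class cup alpha)
     = 2^-1 * \sum_(k \in [set k : nat * nat |
                   (0 < k.1)%N /\ (0 < k.2)%N /\ coprime k.1 k.2])
              \sum_(bb \in [set bb : 'rV[int]_r * 'rV[int]_r |
                   bb.1 + bb.2 = beta /\ cpos omega bb.1 /\ cpos omega bb.2
                   /\ dvdv k.1 bb.1 /\ dvdv k.2 bb.2])
                (pairing alpha bb.1 * pairing alpha bb.2
                   / ((k.1 ^ 2 * k.2 ^ 2)%N)%:R
                   * gpair G (n (divv k.1 bb.1)) (n (divv k.2 bb.2)))).
Proof.
move=> _ _ gromov_finite multiple_cover _ m_nonpos m_rec _ alpha_beta.
have sums_eq := etrans (meeting_sum gromov_finite multiple_cover m_nonpos m_rec alpha_beta)
  (esym (cover_sum G gromov_finite multiple_cover alpha_beta)).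
by split=> ->; congr (_ * _); [exact: sums_eq | exact: esym sums_eq].
Qed.
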